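(* For every $n\geq 1$, $M\geq 2$ and $\Upsilon>0$, $$\epsilon_{\mathrm{m}}^{\star}(n,M,\Upsilon)\;\geq\;\epsilon_{\mathrm{e}}^{\star}\Bigl(n+1,M,\tfrac{n\Upsilon}{n+1}\Bigr).$$
   Context: AWGN channel with noise variance $\sigma^2>0$: for input $\mathbf{x}\in\mathbb{R}^n$ the output $\mathbf{y}\in\mathbb{R}^n$ has density $w(\mathbf{y}|\mathbf{x})=\prod_{i=1}^n\varphi_{x_i,\sigma}(y_i)$, where $\varphi_{\mu,\sigma}(y)=\frac{1}{\sqrt{2\pi}\sigma}e^{-(y-\mu)^2/(2\sigma^2)}$. A codebook is $\mathcal{C}=\{\mathbf{c}_1,\dots,\mathbf{c}_M\}\subset\mathbb{R}^n$; a message $V$ uniform on $\{1,\dots,M\}$ is sent as $\mathbf{c}_V$, and the receiver uses maximum-likelihood decoding to produce $\hat V$; $P_e(\mathcal{C})=\Pr\{\hat V\neq V\}$ is the average error probability. Power-constrained families: $\mathcal{F}_{\mathrm{e}}(n,M,\Upsilon)=\{\mathcal{C}:\|\mathbf{c}_i\|^2=n\Upsilon\ \forall i\}$ (equal), $\mathcal{F}_{\mathrm{m}}(n,M,\Upsilon)=\{\mathcal{C}:\|\mathbf{c}_i\|^2\le n\Upsilon\ \forall i\}$ (maximal), $\mathcal{F}_{\mathrm{a}}(n,M,\Upsilon)=\{\mathcal{C}:\frac1M\sum_i\|\mathbf{c}_i\|^2\le n\Upsilon\}$ (average). For $i\in\{\mathrm{e},\mathrm{m},\mathrm{a}\}$,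 $\epsilon_i^{\star}(n,M,\Upsilon)=\inf_{\mathcal{C}\in\mathcal{F}_i(n,M,\Upsilon)}P_e(\mathcal{C})$ (with $\sigma^2$ fixed). *)

From Stdlib Require Import Reals Lra Lia.
Open Scope R_scope.

Fixpoint rsum (n : nat) (f : nat -> R) : R :=
  match n with O => 0 | S k => rsum k f + f k end.
Fixpoint rprod (n : nat) (f : nat -> R) : R :=
  match n with O => 1 | S k => rprod k f * f k end.

Definition phi (mu sigma y : R) : R :=
  / (sqrt (2 * PI) * sigma) * exp (- (y - mu) ^ 2 / (2 * sigma ^ 2)).

(* vectors of R^n are represented as nat -> R (only coordinates < n matter) *)
Definition vecR := nat -> R.

(* AWGN transition density w(y|x) = prod_{i<n} phi_{x_i,sigma}(y_i) *)
Definition w (n : nat) (sigma : R) (y x : vecR) : R :=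
  rprod n (fun i => phi (x i) sigma (y i)).

(* a codebook: message j (j < M) is sent as codeword C j *)
Definition codebook := nat -> vecR.

(* ML decoder (ties broken towards the smallest index):
   ml_best k = an index j < k maximizing w(y | C j), for k >= 1 *)
Fixpoint ml_best (n : nat) (sigma : R) (C : codebook) (y : vecR) (k : nat) : nat :=
  match k with
  | O => O
  | S O => O
  | S k' =>
      let b := ml_best n sigma C y k' in
      if Rlt_dec (w n sigma y (C b)) (w n sigma y (C k')) then k' else b
  end.

Definition ml_decode (n M : nat) (sigma : R) (C : codebook) (y : vecR) : nat :=
  ml_best n sigma C y M.

(* Riemann sum of f over the box [-T,T]^n with N subdivisions per axis,
   sampled at the lower-left corners of the cells *)
Fixpoint grid_sum (d N : nat) (T : R) (f : vecR -> R) : R :=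
  match d with
  | O => f (fun _ => 0)
  | S d' => rsum N (fun k =>
       grid_sum d' N T (fun y => f (fun i =>
          if Nat.eqb i d' then - T + INR k * (2 * T / INR N) else y i)))
  end.

Definition riemann_box (n N : nat) (T : R) (f : vecR -> R) : R :=
  grid_sum n N T f * (2 * T / INR N) ^ n.

(* (improper Riemann) integral over R^n:  I = lim_{m->oo} lim_{N->oo}
   Riemann sums over [-m,m]^n *)
Definition has_integral (n : nat) (f : vecR -> R) (I : R) : Prop :=
  exists B : nat -> R,
    (forall m : nat, Un_cv (fun N => riemann_box n (S N) (INR m) f) (B m)) /\
    Un_cv B I.

Definition err_ind (n M : nat) (sigma : R) (C : codebook) (v : nat) (y : vecR) : R :=
  if Nat.eqb (ml_decode n M sigma C y) v then 0 else 1.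

(* P_e(C) = (1/M) sum_{v<M} Pr{ V^ <> v | V = v }
          = integral over R^n of (1/M) sum_v w(y|c_v) 1[dec(y) <> v] *)
Definition Pe_is (n M : nat) (sigma : R) (C : codebook) (p : R) : Prop :=
  has_integral n
    (fun y => / INR M * rsum M (fun v => w n sigma y (C v) * err_ind n M sigma C v y))
    p.

Definition sqnorm (n : nat) (x : vecR) : R := rsum n (fun i => x i ^ 2).

Definition F_e (n M : nat) (Ups : R) (C : codebook) : Prop :=
  forall i, (i < M)%nat -> sqnorm n (C i) = INR n * Ups.
Definition F_m (n M : nat) (Ups : R) (C : codebook) : Prop :=
  forall i, (i < M)%nat -> sqnorm n (C i) <= INR n * Ups.
Definition F_a (n M : nat) (Ups : R) (C : codebook) : Prop :=
  / INR M * rsum M (fun i => sqnorm n (C i)) <= INR n * Ups.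

Definition is_glb (A : R -> Prop) (e : R) : Prop :=
  (forall x, A x -> e <= x) /\ (forall b, (forall x, A x -> b <= x) -> b <= e).

(* eps_star F n M Ups sigma e  :<->  e = inf_{C in F(n,M,Ups)} P_e(C) *)
Definition eps_star (F : nat -> nat -> R -> codebook -> Prop)
  (n M : nat) (Ups sigma e : R) : Prop :=
  is_glb (fun p => exists C, F n M Ups C /\ Pe_is n M sigma C p) e.

(* Given a code C with ||c_v||^2 <= n Ups, append to each codeword the
   coordinate a_v = sqrt(n Ups - ||c_v||^2); the new code C' has all energies
   equal to n Ups = (n+1) (n Ups/(n+1)).  With ML decoding the error
   probability is  P_e = 1 - (1/M) \int max_v w(y|c_v) dy,  and since
   max_v w'((y,t)|c'_v) >= w(y|c_dec(y)) phi_{a_dec(y)}(t), integrating out t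
   shows that \int max_v w' >= \int max_v w, i.e. P_e(C') <= P_e(C).  Hence
   every value of the first infimum dominates the second one. *)

From Stdlib Require Import Reals Lra Lia ZArith.

Module GaussianIntegral.
From HB Require Import structures.
From mathcomp Require Import all_boot all_order all_algebra.
From mathcomp Require Import all_classical all_reals all_analysis.
From mathcomp Require Import Rstruct Rstruct_topology.
Import Order.TTheory GRing.Theory Num.Theory.
Import numFieldNormedType.Exports.
Local Open Scope classical_set_scope.
Local Open Scope ring_scope.

Section Primitive.
Context {RR : realType}.

Definition primitive (f : RR -> RR) (x : RR) : RR :=
  (\int[@lebesgue_measure RR]_(t in `[0, x]) f t)%R.

Lemma primitive_diff_quotient (f : RR -> RR) : continuous f -> forall x : RR, 0 < x ->
  (fun h => h^-1 * (primitive f (h + x) - primitive f x)) @ 0^' --> f x.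
Proof.
move=> cf x x0.
have [df <-] : derivable (primitive f) x 1 /\ derive1 (primitive f) x = f x.
  apply: (@continuous_FTC1 RR f (BLeft 0) _ (x + 1) _ _ _ _).
  - by rewrite ltrDl.
  - apply: continuous_compact_integrable; first exact: segment_compact.
    exact: continuous_subspaceT.
  - by rewrite /= lte_fin.
  - exact: cf.
rewrite derive1E; move: df; rewrite /derivable /derive /=.
apply: cvg_trans; apply: near_eq_cvg; near=> h.
by rewrite /= -[h%:A]/(h * 1) mulr1.
Unshelve. all: by end_near. Qed.

Lemma primitive_bounds (f : RR -> RR) : continuous f -> (forall t, 0 <= f t <= 1) ->
  forall x : RR, 0 <= x -> 0 <= primitive f x <= x.
Proof.
move=> cf fb x x0; apply/andP; split.
  by apply: Rintegral_ge0 => t _; have /andP[] := fb t.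
have len_x : \int[@lebesgue_measure RR]_(t in `[0, x]) (cst 1 t) = x.
  rewrite Rintegral_cst//= lebesgue_measure_itv/= lte_fin.
  by case: ltgtP x0 => // [x_gt0|<-] _; rewrite /= ?subr0 mul1r.
rewrite -[X in _ <= X]len_x; apply: le_Rintegral => //.
- apply: continuous_compact_integrable; first exact: segment_compact.
  exact: continuous_subspaceT.
- apply: continuous_compact_integrable; first exact: segment_compact.
  by apply: continuous_subspaceT => z; exact: cvg_cst.
- by move=> t _; have /andP[] := fb t.
Qed.
End Primitive.

Local Notation R := Rdefinitions.R.

Definition Rprimitive (f : R -> R) (x : R) : R := primitive f x.

Definition gauss (t : R) : R := exp (Ropp (Rmult t t)).
Definition arctan_deriv (t : R) : R := Rinv (Rplus 1 (Rmult t t)).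
Definition mc_pi : R := pi.

Lemma primitive_derivative (f : R -> R) : (forall x, continuity_pt f x) ->
  forall x, Rlt 0 x -> derivable_pt_lim (Rprimitive f) x (f x).
Proof.
move=> cf x /RltP x0.
have cf' : continuous f by move=> z; apply/continuity_pt_cvg.
pose q h := if h == 0 then f x else h^-1 * (primitive f (h + x) - primitive f x).
have cq : continuity_pt q 0.
  apply/continuity_pt_cvg'.
  have -> : q 0 = f x by rewrite /q eqxx.
  apply: cvg_trans (@primitive_diff_quotient R f cf' x x0); apply: near_eq_cvg.
  near=> h; rewrite /q ifF //; apply/negbTE.
  by near: h; exact: nbhs_dnbhs_neq.
move=> eps eps_gt0; have [alp [alp_gt0 Hq]] := cq eps eps_gt0.
exists (mkposreal alp alp_gt0) => h h_neq0 h_small.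
have := Hq h (conj (conj I (not_eq_sym h_neq0)) _).
rewrite /R_dist /= /Rdist Rminus_0_r => /(_ h_small).
rewrite /q ifF; last by apply/negbTE/eqP.
by rewrite eqxx Rplus_comm /Rdiv Rmult_comm.
Unshelve. all: by end_near. Qed.

Lemma primitive_boundsR (f : R -> R) : (forall x, continuity_pt f x) ->
  (forall t, Rle 0 (f t) /\ Rle (f t) 1) ->
  forall x, Rle 0 x -> Rle 0 (Rprimitive f x) /\ Rle (Rprimitive f x) x.
Proof.
move=> cf fb x /RleP x0.
have cf' : continuous f by move=> z; apply/continuity_pt_cvg.
have fb' t : 0 <= f t <= 1 by have [/RleP -> /RleP ->] := fb t.
by have /andP[/RleP ? /RleP ?] := @primitive_bounds R f cf' fb' x x0.
Qed.

Lemma mc_pi_div4 : (mc_pi / 4)%coqR = pi / 4.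
Proof. by rewrite /mc_pi RdivE; congr (_ / _); rewrite IZRposE INRE. Qed.

Lemma primitive_arctan_deriv : (Rprimitive arctan_deriv 1 = mc_pi / 4)%coqR.
Proof.
have -> : arctan_deriv = (fun t : R => (oneDsqr t)^-1).
  by apply: funext => t; rewrite /arctan_deriv /oneDsqr expr2.
by rewrite /Rprimitive /primitive integral0_oneDsqr// atan1 mc_pi_div4.
Qed.

Lemma primitive_gauss_sqr : (forall eps, 0 < eps -> exists X, forall x, X < x ->
  Rabs (Rprimitive gauss x ^ 2 - mc_pi / 4) < eps)%coqR.
Proof.
move=> eps /RltP e0.
have /cvgrPdist_lt/(_ eps e0) [X [_ HX]] :=
  gauss_integral_proof.cvg_integral0_gauss_sqr (R := R).
exists X => x /RltP /HX.
have -> : gauss = @gauss_fun R by apply: funext => t; rewrite /gauss /gauss_fun RexpE expr2.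
by rewrite mc_pi_div4 RpowE RabsE distrC => /RltP.
Qed.
End GaussianIntegral.

From Coquelicot Require Import Coquelicot.
Open Scope R_scope.

Lemma rsum_ext N f g : (forall k, (k < N)%nat -> f k = g k) -> rsum N f = rsum N g.
Proof.
  revert f g; induction N; intros f g H; simpl; auto.
  rewrite (IHN f g), (H N); auto; intros; apply H; lia.
Qed.

Lemma rprod_ext N f g : (forall k, (k < N)%nat -> f k = g k) -> rprod N f = rprod N g.
Proof.
  revert f g; induction N; intros f g H; simpl; auto.
  rewrite (IHN f g), (H N); auto; intros; apply H; lia.
Qed.

Lemma rsum_plus N f g : rsum N (fun k => f k + g k) = rsum N f + rsum N g.
Proof. induction N; simpl; [lra|]. rewrite IHN; lra. Qed.

Lemma rsum_minus N f g : rsum N (fun k => f k - g k) = rsum N f - rsum N g.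
Proof. induction N; simpl; [lra|]. rewrite IHN; lra. Qed.

Lemma rsum_scal_r N f c : rsum N f * c = rsum N (fun k => f k * c).
Proof. induction N; simpl; [lra|]. rewrite <- IHN; lra. Qed.

Lemma rsum_scal_l N f c : c * rsum N f = rsum N (fun k => c * f k).
Proof. induction N; simpl; [lra|]. rewrite <- IHN; lra. Qed.

Lemma rsum_le N f g : (forall k, (k < N)%nat -> f k <= g k) -> rsum N f <= rsum N g.
Proof.
  revert f g; induction N; intros f g H; simpl; [lra|].
  assert (f N <= g N) by (apply H; lia).
  assert (rsum N f <= rsum N g) by (apply IHN; intros; apply H; lia). lra.
Qed.

Lemma rsum_const N c : rsum N (fun _ => c) = INR N * c.
Proof. induction N; simpl rsum; [simpl; lra|]. rewrite IHN, S_INR; lra. Qed.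

Lemma rsum_nonneg N f : (forall k, (k < N)%nat -> 0 <= f k) -> 0 <= rsum N f.
Proof.
  intros H. replace 0 with (rsum N (fun _ => 0)) by (rewrite rsum_const; ring).
  now apply rsum_le.
Qed.

Lemma rsum_abs N f : Rabs (rsum N f) <= rsum N (fun k => Rabs (f k)).
Proof.
  induction N; simpl; [rewrite Rabs_R0; lra|].
  eapply Rle_trans; [apply Rabs_triang|lra].
Qed.

Lemma rsum_term_le N f u : (u < N)%nat -> (forall k, (k < N)%nat -> 0 <= f k) ->
  f u <= rsum N f.
Proof.
  revert f u; induction N; intros f u Hu H; [lia|]. simpl.
  assert (0 <= f N) by (apply H; lia).
  destruct (Nat.eq_dec u N) as [->|].
  - assert (0 <= rsum N f) by (apply rsum_nonneg; intros; apply H; lia). lra.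
  - assert (f u <= rsum N f) by (apply IHN; [lia|intros; apply H; lia]). lra.
Qed.

Lemma rprod_nonneg N f : (forall k, (k < N)%nat -> 0 <= f k) -> 0 <= rprod N f.
Proof.
  revert f; induction N; intros f H; simpl; [lra|].
  apply Rmult_le_pos; [apply IHN; intros|]; apply H; lia.
Qed.

Lemma rprod_one N : rprod N (fun _ => 1) = 1.
Proof. induction N; simpl; auto. rewrite IHN; ring. Qed.

Lemma rprod_scal_pow N f c : rprod N f * c ^ N = rprod N (fun i => f i * c).
Proof. induction N; simpl; [ring|]. rewrite <- IHN. ring. Qed.

Lemma cv_const c : Un_cv (fun _ : nat => c) c.
Proof. intros eps He. exists 0%nat. intros. unfold R_dist. rewrite Rminus_eq_0, Rabs_R0. lra. Qed.

Lemma cv_scal u l c : Un_cv u l -> Un_cv (fun N => c * u N) (c * l).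
Proof. intros. apply CV_mult; auto. apply cv_const. Qed.

Lemma cv_ext u v l : (forall N, u N = v N) -> Un_cv u l -> Un_cv v l.
Proof. intros E H eps He. destruct (H eps He) as [N0 HN]. exists N0. intros. rewrite <- E. auto. Qed.

Lemma cv_rsum d (u : nat -> nat -> R) l : (forall i, (i < d)%nat -> Un_cv (u i) (l i)) ->
  Un_cv (fun N => rsum d (fun i => u i N)) (rsum d l).
Proof.
  revert u l; induction d; intros u l H; simpl; [apply cv_const|].
  apply CV_plus; [apply IHd; intros|]; apply H; lia.
Qed.

Lemma cv_rprod d (u : nat -> nat -> R) l : (forall i, (i < d)%nat -> Un_cv (u i) (l i)) ->
  Un_cv (fun N => rprod d (fun i => u i N)) (rprod d l).
Proof.
  revert u l; induction d; intros u l H; simpl; [apply cv_const|].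
  apply CV_mult; [apply IHd; intros|]; apply H; lia.
Qed.

Lemma cv_div_S c : Un_cv (fun N => c / INR (S N)) 0.
Proof.
  intros eps He. destruct (archimed (Rabs c / eps)) as [H1 _].
  assert (0 <= Rabs c / eps) by (apply Rmult_le_pos; [apply Rabs_pos|left; apply Rinv_0_lt_compat; auto]).
  assert (0 < up (Rabs c / eps))%Z by (apply lt_IZR; simpl; lra).
  exists (Z.to_nat (up (Rabs c / eps))). intros n Hn. unfold R_dist. rewrite Rminus_0_r.
  assert (IZR (up (Rabs c / eps)) <= INR n).
  { rewrite <- (Z2Nat.id (up (Rabs c / eps))) by lia. rewrite <- INR_IZR_INZ. apply le_INR; lia. }
  rewrite S_INR in *. pose proof (pos_INR n).
  unfold Rdiv. rewrite Rabs_mult, Rabs_inv, (Rabs_right (INR n + 1)) by lra.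
  apply Rmult_lt_reg_r with (INR n + 1); [lra|]. rewrite Rmult_assoc, Rinv_l, Rmult_1_r by lra.
  assert (Rabs c = Rabs c / eps * eps) by (field; lra). nra.
Qed.

Definition set_coord (y : vecR) (d : nat) (t : R) : vecR :=
  fun i => if Nat.eqb i d then t else y i.

Definition grid_point (N : nat) (T : R) (k : nat) : R := - T + INR k * (2 * T / INR N).

Lemma grid_sum_S d N T f :
  grid_sum (S d) N T f =
  rsum N (fun k => grid_sum d N T (fun y => f (set_coord y d (grid_point N T k)))).
Proof. reflexivity. Qed.

Lemma grid_sum_ext d N T f g : (forall y, f y = g y) -> grid_sum d N T f = grid_sum d N T g.
Proof.
  revert f g; induction d; intros f g H; simpl; auto.
  apply rsum_ext; intros. apply IHd; intros; apply H.
Qed.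

Lemma grid_sum_le d N T f g : (forall y, f y <= g y) -> grid_sum d N T f <= grid_sum d N T g.
Proof.
  revert f g; induction d; intros f g H; simpl; auto.
  apply rsum_le; intros. apply IHd; intros; apply H.
Qed.

Lemma grid_sum_plus d N T f g :
  grid_sum d N T (fun y => f y + g y) = grid_sum d N T f + grid_sum d N T g.
Proof.
  revert f g; induction d; intros; simpl; auto.
  rewrite <- rsum_plus. apply rsum_ext; intros. apply IHd.
Qed.

Lemma grid_sum_scal d N T f c : grid_sum d N T (fun y => c * f y) = c * grid_sum d N T f.
Proof.
  revert f; induction d; intros; simpl; auto.
  rewrite rsum_scal_l. apply rsum_ext; intros. apply IHd.
Qed.

Lemma grid_sum_rsum d N T K (F : nat -> vecR -> R) :
  grid_sum d N T (fun y => rsum K (fun j => F j y)) = rsum K (fun j => grid_sum d N T (F j)).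
Proof.
  induction K; simpl.
  - rewrite (grid_sum_ext d N T _ (fun y => 0 * 0)) by (intros; ring).
    rewrite grid_sum_scal; ring.
  - now rewrite grid_sum_plus, IHK.
Qed.

Lemma grid_sum_prod d N T (g : nat -> R -> R) :
  grid_sum d N T (fun y => rprod d (fun i => g i (y i))) =
  rprod d (fun i => rsum N (fun k => g i (grid_point N T k))).
Proof.
  revert g; induction d; intros; simpl; auto.
  rewrite rsum_scal_l. apply rsum_ext; intros k Hk.
  rewrite (grid_sum_ext d N T _
             (fun y => g d (grid_point N T k) * rprod d (fun i => g i (y i)))).
  - rewrite grid_sum_scal, IHd. ring.
  - intros y. unfold set_coord. rewrite Nat.eqb_refl, Rmult_comm. f_equal.
    apply rprod_ext. intros i Hi. destruct (Nat.eqb_spec i d); [lia|auto].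
Qed.

Lemma riemann_box_S d N T f :
  riemann_box (S d) N T f =
  rsum N (fun k => riemann_box d N T (fun y => f (set_coord y d (grid_point N T k)))
                   * (2 * T / INR N)).
Proof.
  unfold riemann_box. rewrite grid_sum_S. simpl pow.
  rewrite rsum_scal_r. apply rsum_ext; intros. ring.
Qed.

Lemma riemann_box_ext d N T f g : (forall y, f y = g y) ->
  riemann_box d N T f = riemann_box d N T g.
Proof. intros H. unfold riemann_box. now rewrite (grid_sum_ext d N T f g). Qed.

Lemma riemann_box_scal d N T c f :
  riemann_box d N T (fun y => c * f y) = c * riemann_box d N T f.
Proof. unfold riemann_box. rewrite grid_sum_scal. ring. Qed.

Lemma riemann_box_le d N T f g : 0 <= T -> (0 < N)%nat -> (forall y, f y <= g y) ->
  riemann_box d N T f <= riemann_box d N T g.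
Proof.
  intros. unfold riemann_box. apply Rmult_le_compat_r; [|now apply grid_sum_le].
  apply pow_le. unfold Rdiv; apply Rmult_le_pos; [lra|].
  left; apply Rinv_0_lt_compat, lt_0_INR; lia.
Qed.

Lemma riemann_box_rsum d N T K (F : nat -> vecR -> R) :
  riemann_box d N T (fun y => rsum K (fun j => F j y)) = rsum K (fun j => riemann_box d N T (F j)).
Proof. unfold riemann_box. now rewrite grid_sum_rsum, rsum_scal_r. Qed.

Lemma riemann_box_prod d N T (g : nat -> R -> R) :
  riemann_box d N T (fun y => rprod d (fun i => g i (y i))) =
  rprod d (fun i => rsum N (fun k => g i (grid_point N T k)) * (2 * T / INR N)).
Proof. unfold riemann_box. now rewrite grid_sum_prod, rprod_scal_pow. Qed.

Definition in_box (d : nat) (T : R) (y : vecR) : Prop :=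
  forall i, (i < d)%nat -> Rabs (y i) <= T.

(* f is L-Lipschitz (for the l1 distance) on the box [-T,T]^d, where points
   that agree beyond coordinate d are compared *)
Definition box_lipschitz (d : nat) (T L : R) (f : vecR -> R) : Prop :=
  forall y z, in_box d T y -> in_box d T z -> (forall i, (d <= i)%nat -> y i = z i) ->
    Rabs (f y - f z) <= L * rsum d (fun i => Rabs (y i - z i)).

Definition clamp (T t : R) : R := Rmax (- T) (Rmin T t).

Lemma clamp_bound T t : 0 <= T -> Rabs (clamp T t) <= T.
Proof.
  intros. unfold clamp, Rmax, Rmin.
  destruct (Rle_dec T t); destruct (Rle_dec (-T) _); apply Rabs_le; lra.
Qed.

Lemma clamp_id T t : -T <= t <= T -> clamp T t = t.
Proof.
  intros. unfold clamp, Rmax, Rmin.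
  destruct (Rle_dec T t); destruct (Rle_dec (-T) _); lra.
Qed.

Lemma clamp_lipschitz T t s : 0 <= T -> Rabs (clamp T t - clamp T s) <= Rabs (t - s).
Proof.
  intros. unfold clamp, Rmax, Rmin.
  pose proof (Rle_abs (t - s)). pose proof (Rle_abs (- (t - s))). rewrite Rabs_Ropp in *.
  destruct (Rle_dec T t); destruct (Rle_dec T s);
  repeat match goal with |- context [Rle_dec ?a ?b] => destruct (Rle_dec a b) end;
  apply Rabs_le; lra.
Qed.

(* the iterated Riemann integral over [-T,T]^d, innermost coordinate first;
   the outer variable is clamped so that every slice stays in the box *)
Fixpoint box_integral (d : nat) (T : R) (f : vecR -> R) : R :=
  match d with
  | O => f (fun _ => 0)
  | S d' => RInt (fun t => box_integral d' T (fun y => f (set_coord y d' (clamp T t)))) (- T) T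
  end.

Definition slice_integral (d : nat) (T : R) (f : vecR -> R) (t : R) : R :=
  box_integral d T (fun y => f (set_coord y d (clamp T t))).

Lemma box_integral_S d T f : box_integral (S d) T f = RInt (slice_integral d T f) (- T) T.
Proof. reflexivity. Qed.

Lemma lipschitz_ex_RInt (G : R -> R) K a b :
  (forall t s, Rabs (G t - G s) <= K * Rabs (t - s)) -> ex_RInt G a b.
Proof.
  intros HG. apply (ex_RInt_continuous (V:=R_CompleteNormedModule)). intros x _.
  apply continuity_pt_filterlim. intros eps Heps.
  pose proof (Rabs_pos K). exists (eps / (Rabs K + 1)). split.
  - apply Rdiv_lt_0_compat; lra.
  - intros y [_ Hy]. unfold R_dist in *. simpl in *. unfold R_dist in *.
    eapply Rle_lt_trans; [apply HG|].
    pose proof (Rabs_pos (y - x)). pose proof (Rle_abs K).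
    apply Rmult_lt_compat_l with (r := Rabs K + 1) in Hy; [|lra].
    replace ((Rabs K + 1) * (eps / (Rabs K + 1))) with eps in Hy by (field; lra). nra.
Qed.

Lemma set_coord_in_box d T y t : in_box d T y -> Rabs t <= T -> in_box (S d) T (set_coord y d t).
Proof. intros Hy Ht i Hi. unfold set_coord. destruct (Nat.eqb_spec i d); auto. apply Hy; lia. Qed.

Lemma rsum_set_coord d y z t :
  rsum (S d) (fun i => Rabs (set_coord y d t i - set_coord z d t i)) =
  rsum d (fun i => Rabs (y i - z i)).
Proof.
  cbn [rsum]. unfold set_coord. rewrite Nat.eqb_refl, Rminus_eq_0, Rabs_R0, Rplus_0_r.
  apply rsum_ext. intros. destruct (Nat.eqb_spec k d); [lia|auto].
Qed.

Lemma box_lipschitz_slice d T L f t : box_lipschitz (S d) T L f -> Rabs t <= T ->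
  box_lipschitz d T L (fun y => f (set_coord y d t)).
Proof.
  intros H Ht y z Hy Hz Heq. rewrite <- rsum_set_coord with (t := t).
  apply H; try apply set_coord_in_box; auto.
  intros i Hi. unfold set_coord. destruct (Nat.eqb_spec i d); auto. apply Heq; lia.
Qed.

Lemma box_lipschitz_last d T L f y t s : box_lipschitz (S d) T L f -> in_box d T y ->
  Rabs t <= T -> Rabs s <= T ->
  Rabs (f (set_coord y d t) - f (set_coord y d s)) <= L * Rabs (t - s).
Proof.
  intros Hf Hy Ht Hs. eapply Rle_trans.
  - apply Hf; try apply set_coord_in_box; auto.
    intros i Hi. unfold set_coord. destruct (Nat.eqb_spec i d); [lia|auto].
  - cbn [rsum]. unfold set_coord at 3 4. rewrite Nat.eqb_refl.
    rewrite (rsum_ext d _ (fun _ => 0)), rsum_const; [right; ring|].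
    intros k Hk. unfold set_coord. destruct (Nat.eqb_spec k d); [lia|].
    now rewrite Rminus_eq_0, Rabs_R0.
Qed.

Definition uniformly_close (d : nat) (T eta : R) (f g : vecR -> R) : Prop :=
  forall y, in_box d T y -> Rabs (f y - g y) <= eta.

Definition box_integral_stable (d : nat) : Prop := forall T L eta f g, 0 <= T -> 0 <= L ->
  box_lipschitz d T L f -> box_lipschitz d T L g -> uniformly_close d T eta f g ->
  Rabs (box_integral d T f - box_integral d T g) <= (2 * T) ^ d * eta.

Lemma slice_integral_lipschitz_of d : box_integral_stable d ->
  forall T L f, 0 <= T -> 0 <= L -> box_lipschitz (S d) T L f ->
  forall t s, Rabs (slice_integral d T f t - slice_integral d T f s)
              <= ((2 * T) ^ d * L) * Rabs (t - s).
Proof.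
  intros Hstab T L f HT HL Hf t s.
  eapply Rle_trans.
  - apply (Hstab T L); auto; try (apply box_lipschitz_slice; auto; apply clamp_bound; auto).
    intros y Hy. apply box_lipschitz_last with (T := T) (L := L); auto; apply clamp_bound; auto.
  - rewrite Rmult_assoc. apply Rmult_le_compat_l; [apply pow_le; lra|].
    apply Rmult_le_compat_l; auto. now apply clamp_lipschitz.
Qed.

Lemma box_integral_stable_all d : box_integral_stable d.
Proof.
  induction d; intros T L eta f g HT HL Hf Hg Hs.
  - simpl. rewrite Rmult_1_l. apply Hs. intros i Hi; lia.
  - rewrite !box_integral_S.
    pose proof (slice_integral_lipschitz_of d IHd T L f HT HL Hf) as Gf.
    pose proof (slice_integral_lipschitz_of d IHd T L g HT HL Hg) as Gg.
    assert (Ef := lipschitz_ex_RInt _ _ (-T) T Gf).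
    assert (Eg := lipschitz_ex_RInt _ _ (-T) T Gg).
    pose proof (RInt_minus _ _ _ _ Ef Eg) as E. unfold minus, plus, opp in E; simpl in E.
    unfold Rminus at 1. rewrite <- E.
    eapply Rle_trans; [apply abs_RInt_le_const with (M := (2 * T) ^ d * eta)|]; [lra| | |].
    + exact (ex_RInt_minus (V:=R_NormedModule) _ _ _ _ Ef Eg).
    + intros t _. apply (IHd T L); auto; try (apply box_lipschitz_slice; auto; apply clamp_bound; auto).
      intros y Hy. apply Hs. apply set_coord_in_box; auto. apply clamp_bound; auto.
    + simpl. right; ring.
Qed.

Lemma slice_integral_lipschitz d T L f : 0 <= T -> 0 <= L -> box_lipschitz (S d) T L f ->
  forall t s, Rabs (slice_integral d T f t - slice_integral d T f s)
              <= ((2 * T) ^ d * L) * Rabs (t - s).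
Proof. apply slice_integral_lipschitz_of, box_integral_stable_all. Qed.

Lemma left_riemann_error (G : R -> R) K a h : 0 <= h -> 0 <= K ->
  (forall t s, Rabs (G t - G s) <= K * Rabs (t - s)) ->
  forall j, Rabs (rsum j (fun k => h * G (a + INR k * h)) - RInt G a (a + INR j * h))
            <= INR j * K * h * h.
Proof.
  intros Hh HK HG. assert (Gint : forall u v, ex_RInt G u v) by (intros; eapply lipschitz_ex_RInt; eauto).
  induction j.
  - simpl. rewrite Rmult_0_l, Rplus_0_r, RInt_point. unfold zero; simpl.
    rewrite Rminus_0_r, Rabs_R0. lra.
  - cbn [rsum]. set (x := a + INR j * h) in *.
    replace (a + INR (S j) * h) with (x + h) by (unfold x; rewrite S_INR; ring).
    rewrite <- (RInt_Chasles G a x (x + h)) by auto. unfold plus; simpl.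
    assert (Hcell : Rabs (h * G x - RInt G x (x + h)) <= K * h * h).
    { assert (Ediff : RInt (fun t => G t - G x) x (x + h) = RInt G x (x + h) - h * G x).
      { pose proof (RInt_minus (V:=R_CompleteNormedModule) G (fun _ => G x) x (x + h)) as E.
        unfold minus, plus, opp in E; simpl in E.
        change (RInt (fun t => G t + - G x) x (x + h) = RInt G x (x + h) - h * G x).
        rewrite E; auto.
        - rewrite RInt_const. unfold scal; simpl. unfold mult; simpl. ring.
        - apply (ex_RInt_const (V:=R_CompleteNormedModule)). }
      replace (h * G x - RInt G x (x + h)) with (- RInt (fun t => G t - G x) x (x + h))
        by (rewrite Ediff; ring).
      rewrite Rabs_Ropp.
      eapply Rle_trans; [apply abs_RInt_le_const with (M := K * h)|]; [lra| | |right; ring].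
      + apply (ex_RInt_minus (V:=R_CompleteNormedModule)); auto.
        apply (ex_RInt_const (V:=R_CompleteNormedModule)).
      + intros t Ht. eapply Rle_trans; [apply HG|].
        apply Rmult_le_compat_l; auto. rewrite Rabs_right; lra. }
    replace (rsum j (fun k => h * G (a + INR k * h)) + h * G x - (RInt G a x + RInt G x (x + h)))
      with ((rsum j (fun k => h * G (a + INR k * h)) - RInt G a x)
            + (h * G x - RInt G x (x + h))) by ring.
    eapply Rle_trans; [apply Rabs_triang|]. change (match j with 0%nat => 1 | S _ => INR j + 1 end) with (INR (S j)). rewrite S_INR. lra.
Qed.

Lemma grid_point_in_interval N T k : 0 <= T -> (k < N)%nat -> Rabs (grid_point N T k) <= T.
Proof.
  intros HT Hk. unfold grid_point.
  assert (0 < INR N) by (apply lt_0_INR; lia).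
  assert (INR k <= INR N) by (apply le_INR; lia). pose proof (pos_INR k).
  assert (0 <= 2 * T / INR N) by (apply Rmult_le_pos; [lra|left; apply Rinv_0_lt_compat; auto]).
  assert (INR k * (2 * T / INR N) <= 2 * T).
  { replace (2 * T) with (INR N * (2 * T / INR N)) at 2 by (field; lra).
    apply Rmult_le_compat_r; auto. }
  assert (0 <= INR k * (2 * T / INR N)) by (apply Rmult_le_pos; auto).
  apply Rabs_le; lra.
Qed.

Lemma rsum_dist_le N f g e : (forall k, (k < N)%nat -> Rabs (f k - g k) <= e) ->
  Rabs (rsum N f - rsum N g) <= INR N * e.
Proof.
  intros H. rewrite <- rsum_minus, <- rsum_const.
  eapply Rle_trans; [apply rsum_abs|]. now apply rsum_le.
Qed.

(* at grid points no clamping occurs *)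
Lemma slice_integral_grid_point d N T f k : 0 <= T -> (k < N)%nat ->
  slice_integral d T f (grid_point N T k)
  = box_integral d T (fun y => f (set_coord y d (grid_point N T k))).
Proof.
  intros HT Hk. unfold slice_integral. rewrite clamp_id; [reflexivity|].
  apply Rabs_le_between, grid_point_in_interval; auto.
Qed.

Lemma riemann_box_error d T L N f : 0 <= T -> 0 <= L -> (0 < N)%nat -> box_lipschitz d T L f ->
  Rabs (riemann_box d N T f - box_integral d T f) <= INR d * L * (2 * T) ^ d * (2 * T / INR N).
Proof.
  revert f; induction d; intros f HT HL HN Hf.
  - unfold riemann_box. simpl. rewrite Rmult_1_r, Rminus_eq_0, Rabs_R0. lra.
  - assert (HNp : 0 < INR N) by (apply lt_0_INR; lia).
    set (h := 2 * T / INR N).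
    assert (Hh : 0 <= h) by (unfold h, Rdiv; apply Rmult_le_pos; [lra|left; apply Rinv_0_lt_compat; auto]).
    assert (ENh : INR N * h = 2 * T) by (unfold h; field; lra).
    rewrite riemann_box_S, box_integral_S. fold h.
    set (G := slice_integral d T f).
    set (Sbox := rsum N (fun k => riemann_box d N T (fun y => f (set_coord y d (grid_point N T k))) * h)).
    set (Sleft := rsum N (fun k => h * G (- T + INR k * h))).
    assert (HK : 0 <= (2 * T) ^ d * L) by (apply Rmult_le_pos; auto; apply pow_le; lra).
    (* the outer integral is approximated by its own left Riemann sum ... *)
    pose proof (left_riemann_error G _ (-T) h Hh HK (slice_integral_lipschitz d T L f HT HL Hf) N)
      as Houter.
    replace (- T + INR N * h) with T in Houter by lra. fold Sleft in Houter.
    (* ... whose terms are approximated by the d-dimensional Riemann sums *)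
    assert (Hinner : Rabs (Sbox - Sleft) <= INR N * (h * (INR d * L * (2 * T) ^ d * h))).
    { apply rsum_dist_le. intros k Hk.
      change (- T + INR k * h) with (grid_point N T k).
      unfold G. rewrite slice_integral_grid_point by auto.
      set (Fk := fun y => f (set_coord y d (grid_point N T k))).
      replace (riemann_box d N T Fk * h - h * box_integral d T Fk)
        with (h * (riemann_box d N T Fk - box_integral d T Fk)) by ring.
      rewrite Rabs_mult, (Rabs_right h) by lra.
      apply Rmult_le_compat_l, IHd; auto.
      apply box_lipschitz_slice; auto. now apply grid_point_in_interval. }
    replace (Sbox - RInt G (- T) T) with ((Sbox - Sleft) + (Sleft - RInt G (- T) T)) by ring.
    eapply Rle_trans; [apply Rabs_triang|].
    rewrite S_INR. simpl pow.
    replace (INR N * (h * (INR d * L * (2 * T) ^ d * h))) with (INR d * L * (2 * T) ^ d * h * (INR N * h))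
      in Hinner by ring.
    replace (INR N * ((2 * T) ^ d * L) * h * h) with ((2 * T) ^ d * L * h * (INR N * h)) in Houter by ring.
    rewrite ENh in Hinner, Houter.
    replace ((INR d + 1) * L * (2 * T * (2 * T) ^ d) * h)
      with (INR d * L * (2 * T) ^ d * h * (2 * T) + (2 * T) ^ d * L * h * (2 * T)) by ring.
    lra.
Qed.

Lemma riemann_box_cv d T L f : 0 <= T -> 0 <= L -> box_lipschitz d T L f ->
  Un_cv (fun N => riemann_box d (S N) T f) (box_integral d T f).
Proof.
  intros HT HL Hf eps He.
  destruct (cv_div_S (INR d * L * (2 * T) ^ d * (2 * T)) eps He) as [N0 HN0].
  exists N0. intros N HN. unfold R_dist.
  eapply Rle_lt_trans; [apply riemann_box_error with (L := L); auto; lia|].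
  specialize (HN0 N HN). unfold R_dist in HN0. rewrite Rminus_0_r in HN0.
  eapply Rle_lt_trans; [|exact HN0].
  replace (INR d * L * (2 * T) ^ d * (2 * T / INR (S N)))
    with (INR d * L * (2 * T) ^ d * (2 * T) / INR (S N)) by (unfold Rdiv; ring).
  apply Rle_abs.
Qed.

Lemma box_lipschitz_mono d T T' L L' f : T <= T' -> L <= L' ->
  box_lipschitz d T' L f -> box_lipschitz d T L' f.
Proof.
  intros HT HL H y z Hy Hz He. eapply Rle_trans.
  - apply H; auto; intros i Hi; [specialize (Hy i Hi)|specialize (Hz i Hi)]; lra.
  - apply Rmult_le_compat_r; auto. apply rsum_nonneg; intros; apply Rabs_pos.
Qed.

Lemma box_integral_nonneg d T L f : 0 <= T -> 0 <= L -> box_lipschitz d T L f ->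
  (forall y, in_box d T y -> 0 <= f y) -> 0 <= box_integral d T f.
Proof.
  revert f; induction d; intros f HT HL Hf H.
  - simpl. apply H. intros i Hi; lia.
  - rewrite box_integral_S. apply RInt_ge_0; [lra| |].
    + eapply lipschitz_ex_RInt, (slice_integral_lipschitz d T L f); auto.
    + intros t _. apply (IHd _ HT HL); try (apply box_lipschitz_slice; auto; apply clamp_bound; auto).
      intros y Hy. apply H. apply set_coord_in_box; auto. apply clamp_bound; auto.
Qed.

Lemma box_integral_mono_box d T T' L f : 0 <= T -> T <= T' -> 0 <= L -> box_lipschitz d T' L f ->
  (forall y, 0 <= f y) -> box_integral d T f <= box_integral d T' f.
Proof.
  revert f; induction d; intros f HT HTT HL Hf H.
  - simpl. lra.
  - rewrite !box_integral_S.
    assert (HfT : box_lipschitz (S d) T L f) by (eapply box_lipschitz_mono; [exact HTT|apply Rle_refl|exact Hf]).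
    set (G := slice_integral d T f). set (G' := slice_integral d T' f).
    assert (HG' := slice_integral_lipschitz d T' L f ltac:(lra) HL Hf). fold G' in HG'.
    assert (G'int : forall a b, ex_RInt G' a b) by (intros; eapply lipschitz_ex_RInt; exact HG').
    assert (G'pos : forall t, 0 <= G' t).
    { intros t. apply (box_integral_nonneg d T' L); try lra; auto.
      apply box_lipschitz_slice; auto. apply clamp_bound; lra. }
    apply Rle_trans with (RInt G' (-T) T).
    + apply RInt_le; auto; [lra| |].
      * eapply lipschitz_ex_RInt, (slice_integral_lipschitz d T L f); auto.
      * intros t Ht. unfold G, G', slice_integral. rewrite !clamp_id by lra.
        apply (IHd _ HT HTT HL); auto. apply box_lipschitz_slice; auto. apply Rabs_le; lra.
    + rewrite <- (RInt_Chasles G' (-T') (-T) T') by auto.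
      rewrite <- (RInt_Chasles G' (-T) T T') by auto.
      unfold plus; simpl.
      assert (0 <= RInt G' (- T') (- T)) by (apply RInt_ge_0; auto; lra).
      assert (0 <= RInt G' T T') by (apply RInt_ge_0; auto; lra).
      lra.
Qed.

Notation gauss := GaussianIntegral.gauss.
Notation primitive := GaussianIntegral.Rprimitive.

Lemma gauss_continuous x : continuity_pt gauss x.
Proof.
  unfold GaussianIntegral.gauss. apply continuity_pt_comp with (f1 := fun t => - (t * t)).
  - apply continuity_pt_opp, continuity_pt_mult; apply continuity_pt_id.
  - apply derivable_continuous_pt, derivable_pt_exp.
Qed.

Lemma gauss_bounds t : 0 <= gauss t <= 1.
Proof.
  unfold GaussianIntegral.gauss. split; [left; apply exp_pos|].
  rewrite <- exp_0. destruct (Req_dec t 0) as [->|]; [right; f_equal; ring|].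
  left. apply exp_increasing. nra.
Qed.

Lemma gauss_ex_RInt a b : ex_RInt gauss a b.
Proof.
  apply (ex_RInt_continuous (V:=R_CompleteNormedModule)). intros.
  apply continuity_pt_filterlim, gauss_continuous.
Qed.

Lemma arctan_deriv_continuous x : continuity_pt GaussianIntegral.arctan_deriv x.
Proof.
  unfold GaussianIntegral.arctan_deriv. apply continuity_pt_inv; [|nra].
  apply continuity_pt_plus; [apply continuity_pt_const; intros ? ?; auto|].
  apply continuity_pt_mult; apply continuity_pt_id.
Qed.

Lemma arctan_deriv_bounds t : 0 <= GaussianIntegral.arctan_deriv t <= 1.
Proof.
  unfold GaussianIntegral.arctan_deriv. split; [left; apply Rinv_0_lt_compat; nra|].
  rewrite <- Rinv_1. apply Rinv_le_contravar; nra.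
Qed.

(* the Lebesgue primitive coincides with the Riemann integral, by the
   fundamental theorem of calculus on [a,x] and letting a --> 0 *)
Lemma primitive_RInt f : (forall x, continuity_pt f x) -> (forall t, 0 <= f t <= 1) ->
  forall x, 0 <= x -> primitive f x = RInt f 0 x.
Proof.
  intros Hc Hb x Hx.
  assert (Hex : forall a b, ex_RInt f a b).
  { intros; apply (ex_RInt_continuous (V:=R_CompleteNormedModule)).
    intros; apply continuity_pt_filterlim; auto. }
  destruct (Req_dec x 0) as [->|Hx0].
  { rewrite RInt_point. destruct (GaussianIntegral.primitive_boundsR f Hc Hb 0 (Rle_refl 0)).
    unfold zero; simpl; lra. }
  assert (Hdiff : forall a, 0 < a < x -> Rabs (primitive f x - RInt f 0 x) <= 2 * a).
  { intros a Ha.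
    assert (Eax : RInt f a x = primitive f x - primitive f a).
    { apply is_RInt_unique, (is_RInt_derive (V:=R_CompleteNormedModule) (primitive f) f).
      - intros z Hz. apply is_derive_Reals, GaussianIntegral.primitive_derivative; auto.
        rewrite Rmin_left in Hz by lra. lra.
      - intros; apply continuity_pt_filterlim; auto. }
    rewrite <- (RInt_Chasles f 0 a x) by auto. unfold plus; simpl. rewrite Eax.
    assert (B0a : Rabs (RInt f 0 a) <= (a - 0) * 1).
    { apply abs_RInt_le_const; auto; [lra|]. intros t _. destruct (Hb t). rewrite Rabs_right; lra. }
    destruct (GaussianIntegral.primitive_boundsR f Hc Hb a ltac:(lra)).
    replace (primitive f x - (RInt f 0 a + (primitive f x - primitive f a)))
      with (- (RInt f 0 a) + primitive f a) by ring.
    eapply Rle_trans; [apply Rabs_triang|].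
    rewrite Rabs_Ropp, (Rabs_right (primitive f a)) by lra. lra. }
  destruct (Req_dec (primitive f x - RInt f 0 x) 0); [lra|].
  set (dlt := Rabs (primitive f x - RInt f 0 x)).
  assert (0 < dlt) by (apply Rabs_pos_lt; auto).
  pose proof (Rmin_r (x / 2) (dlt / 4)). pose proof (Rmin_l (x / 2) (dlt / 4)).
  assert (0 < Rmin (x / 2) (dlt / 4)) by (apply Rmin_pos; lra).
  assert (dlt <= 2 * Rmin (x / 2) (dlt / 4)) by (apply Hdiff; lra). lra.
Qed.

(* the pi of MathComp-Analysis is Stdlib's PI: both are 4 atan 1 *)
Lemma mc_pi_eq_PI : GaussianIntegral.mc_pi = PI.
Proof.
  assert (E : RInt GaussianIntegral.arctan_deriv 0 1 = atan 1 - atan 0).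
  { apply is_RInt_unique, (is_RInt_derive (V:=R_CompleteNormedModule) atan).
    - intros z _. apply is_derive_Reals. unfold GaussianIntegral.arctan_deriv.
      replace (z * z) with (z ^ 2) by ring. apply derivable_pt_lim_atan.
    - intros z _. apply continuity_pt_filterlim, arctan_deriv_continuous. }
  rewrite atan_1, atan_0, <- primitive_RInt in E;
    auto using arctan_deriv_continuous, arctan_deriv_bounds; try lra.
  rewrite GaussianIntegral.primitive_arctan_deriv in E. lra.
Qed.

Lemma gauss_half_line eps : 0 < eps -> exists X, 0 <= X /\ forall x, X < x ->
  Rabs (RInt gauss 0 x - sqrt PI / 2) < eps.
Proof.
  intros He. set (s := sqrt PI / 2).
  assert (Hs : 0 < s) by (unfold s; pose proof (sqrt_lt_R0 PI PI_RGT_0); lra).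
  assert (Hs2 : s * s = PI / 4).
  { unfold s. replace (sqrt PI / 2 * (sqrt PI / 2)) with (sqrt PI * sqrt PI / 4) by field.
    rewrite sqrt_sqrt; [lra|pose proof PI_RGT_0; lra]. }
  destruct (GaussianIntegral.primitive_gauss_sqr (eps * s) ltac:(nra)) as [X HX].
  exists (Rmax X 0). split; [apply Rmax_r|]. intros x Hx.
  pose proof (Rmax_r X 0). pose proof (Rmax_l X 0).
  specialize (HX x ltac:(lra)).
  rewrite primitive_RInt, mc_pi_eq_PI in HX by (auto using gauss_continuous, gauss_bounds; lra).
  set (E := RInt gauss 0 x) in *.
  assert (E0 : 0 <= E).
  { unfold E. apply RInt_ge_0; [lra|apply gauss_ex_RInt|intros; apply gauss_bounds]. }
  rewrite <- Hs2 in HX. replace (E ^ 2 - s * s) with ((E - s) * (E + s)) in HX by ring.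
  rewrite Rabs_mult, (Rabs_right (E + s)) in HX by lra.
  assert (Rabs (E - s) * s <= Rabs (E - s) * (E + s)) by (apply Rmult_le_compat_l; [apply Rabs_pos|lra]).
  apply Rmult_lt_reg_r with s; auto. lra.
Qed.

Lemma gauss_RInt_reflect a : RInt gauss a 0 = RInt gauss 0 (- a).
Proof.
  pose proof (RInt_comp_lin (V:=R_CompleteNormedModule) gauss (-1) 0 a 0 (gauss_ex_RInt _ _)) as E.
  rewrite (RInt_ext _ (fun y => opp (gauss y))) in E.
  - rewrite (RInt_opp (V:=R_CompleteNormedModule)) in E by apply gauss_ex_RInt.
    unfold opp in E; simpl in E.
    replace (-1 * a + 0) with (-a) in E by ring. replace (-1 * 0 + 0) with 0 in E by ring.
    pose proof (opp_RInt_swap (V:=R_CompleteNormedModule) gauss (-a) 0 (gauss_ex_RInt _ _)) as E2.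
    unfold opp in E2; simpl in E2. lra.
  - intros. unfold scal, opp; simpl; unfold mult; simpl. unfold GaussianIntegral.gauss.
    replace (-1 * x + 0) with (-x) by ring. replace (- x * - x) with (x * x) by ring. ring.
Qed.

Lemma gauss_whole_line eps : 0 < eps -> exists X, 0 <= X /\ forall a b, a < - X -> X < b ->
  Rabs (RInt gauss a b - sqrt PI) < eps.
Proof.
  intros He. destruct (gauss_half_line (eps / 2) ltac:(lra)) as [X [X0 HX]].
  exists X. split; auto. intros a b Ha Hb.
  rewrite <- (RInt_Chasles gauss a 0 b) by apply gauss_ex_RInt. unfold plus; simpl.
  rewrite gauss_RInt_reflect.
  pose proof (HX (-a) ltac:(lra)). pose proof (HX b Hb).
  replace (RInt gauss 0 (- a) + RInt gauss 0 b - sqrt PI)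
    with ((RInt gauss 0 (- a) - sqrt PI / 2) + (RInt gauss 0 b - sqrt PI / 2)) by field.
  eapply Rle_lt_trans; [apply Rabs_triang|lra].
Qed.

Definition phi_max (sigma : R) : R := / (sqrt (2 * PI) * sigma).

Lemma phi_max_pos sigma : 0 < sigma -> 0 < phi_max sigma.
Proof.
  intros. unfold phi_max. apply Rinv_0_lt_compat, Rmult_lt_0_compat; auto.
  apply sqrt_lt_R0. pose proof PI_RGT_0; lra.
Qed.

Lemma phi_bounds mu sigma y : 0 < sigma -> 0 <= phi mu sigma y <= phi_max sigma.
Proof.
  intros Hs. unfold phi. fold (phi_max sigma). pose proof (phi_max_pos sigma Hs).
  assert (0 <= (y - mu) ^ 2 / (2 * sigma ^ 2)).
  { apply Rmult_le_pos; [apply pow2_ge_0|left; apply Rinv_0_lt_compat; nra]. }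
  assert (exp (- (y - mu) ^ 2 / (2 * sigma ^ 2)) <= 1).
  { rewrite <- exp_0. unfold Rdiv in *. destruct (Req_dec ((y - mu) ^ 2 * / (2 * sigma ^ 2)) 0).
    - right. f_equal. lra.
    - left. apply exp_increasing. lra. }
  pose proof (exp_pos (- (y - mu) ^ 2 / (2 * sigma ^ 2))). split; nra.
Qed.

Lemma exp_neg_lipschitz A B : 0 <= A -> 0 <= B -> Rabs (exp (- A) - exp (- B)) <= Rabs (A - B).
Proof.
  assert (W : forall A B, 0 <= A <= B -> Rabs (exp (- A) - exp (- B)) <= Rabs (A - B)).
  { intros A0 B0 [HA HAB].
    assert (exp (- B0) <= exp (- A0)).
    { destruct (Req_dec A0 B0) as [->|]; [lra|left; apply exp_increasing; lra]. }
    rewrite Rabs_right, Rabs_left1 by lra.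
    replace (exp (- B0)) with (exp (- A0) * exp (A0 - B0)) by (rewrite <- exp_plus; f_equal; ring).
    pose proof (exp_ineq1_le (A0 - B0)).
    assert (exp (- A0) <= 1).
    { rewrite <- exp_0. destruct (Req_dec A0 0) as [->|]; [rewrite Ropp_0; lra|].
      left; apply exp_increasing; lra. }
    pose proof (exp_pos (- A0)). nra. }
  intros HA HB. destruct (Rle_dec A B); [apply W; lra|].
  rewrite Rabs_minus_sym, (Rabs_minus_sym A). apply W; lra.
Qed.

Lemma phi_lipschitz mu sigma a b : 0 < sigma ->
  Rabs (phi mu sigma a - phi mu sigma b) <=
  phi_max sigma * ((Rabs a + Rabs b + 2 * Rabs mu) / (2 * sigma ^ 2)) * Rabs (a - b).
Proof.
  intros Hsig. unfold phi. fold (phi_max sigma). pose proof (phi_max_pos sigma Hsig).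
  rewrite <- Rmult_minus_distr_l, Rabs_mult, (Rabs_right (phi_max sigma)) by lra.
  rewrite Rmult_assoc. apply Rmult_le_compat_l; [lra|].
  assert (Hs : 0 < 2 * sigma ^ 2) by nra.
  assert (Hq : forall x, 0 <= (x - mu) ^ 2 / (2 * sigma ^ 2)).
  { intros. apply Rmult_le_pos; [apply pow2_ge_0|left; apply Rinv_0_lt_compat; lra]. }
  replace (- (a - mu) ^ 2 / (2 * sigma ^ 2)) with (- ((a - mu) ^ 2 / (2 * sigma ^ 2))) by (field; lra).
  replace (- (b - mu) ^ 2 / (2 * sigma ^ 2)) with (- ((b - mu) ^ 2 / (2 * sigma ^ 2))) by (field; lra).
  eapply Rle_trans; [apply exp_neg_lipschitz; apply Hq|].
  replace ((a - mu) ^ 2 / (2 * sigma ^ 2) - (b - mu) ^ 2 / (2 * sigma ^ 2)) with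
    ((a - b) * (a + b - 2 * mu) / (2 * sigma ^ 2)) by (field; lra).
  unfold Rdiv. rewrite !Rabs_mult, Rabs_inv, (Rabs_right (2 * sigma ^ 2)) by lra.
  assert (Rabs (a + b - 2 * mu) <= Rabs a + Rabs b + 2 * Rabs mu).
  { unfold Rminus. eapply Rle_trans; [apply Rabs_triang|].
    eapply Rle_trans; [apply Rplus_le_compat_r, Rabs_triang|].
    rewrite Rabs_Ropp, Rabs_mult, (Rabs_right 2) by lra. lra. }
  pose proof (Rabs_pos (a - b)). pose proof (Rinv_0_lt_compat _ Hs).
  assert (Rabs (a - b) * Rabs (a + b - 2 * mu) <= Rabs (a - b) * (Rabs a + Rabs b + 2 * Rabs mu))
    by (apply Rmult_le_compat_l; auto).
  nra.
Qed.

(* the substitution t = (y - mu)/(sqrt 2 sigma) *)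
Lemma phi_RInt_gauss mu sigma T : 0 < sigma ->
  let u := / (sqrt 2 * sigma) in
  RInt (phi mu sigma) (- T) T = / sqrt PI * RInt gauss (u * (- T) + - mu * u) (u * T + - mu * u).
Proof.
  intros Hs u. set (v := - mu * u).
  assert (H2 : 0 < sqrt 2) by (apply sqrt_lt_R0; lra).
  assert (H22 : sqrt 2 * sqrt 2 = 2) by (apply sqrt_sqrt; lra).
  assert (HP : 0 < sqrt PI) by (apply sqrt_lt_R0, PI_RGT_0).
  assert (E2P : sqrt (2 * PI) = sqrt 2 * sqrt PI) by (apply sqrt_mult; pose proof PI_RGT_0; lra).
  rewrite <- (RInt_comp_lin (V:=R_CompleteNormedModule) gauss u v (-T) T (gauss_ex_RInt _ _)).
  rewrite <- (RInt_scal (V:=R_CompleteNormedModule)).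
  2:{ apply (ex_RInt_continuous (V:=R_CompleteNormedModule)). intros z _.
      apply continuity_pt_filterlim. unfold scal; simpl; unfold mult; simpl.
      apply continuity_pt_mult; [apply continuity_pt_const; intros ? ?; auto|].
      apply continuity_pt_comp with (f1 := fun y => u * y + v); [|apply gauss_continuous].
      apply continuity_pt_plus; [|apply continuity_pt_const; intros ? ?; auto].
      apply continuity_pt_mult; [apply continuity_pt_const; intros ? ?; auto|].
      apply continuity_pt_id. }
  apply RInt_ext. intros x _. unfold scal; simpl; unfold mult; simpl.
  unfold phi, GaussianIntegral.gauss. rewrite E2P.
  replace (- ((u * x + v) * (u * x + v))) with (- (x - mu) ^ 2 / (2 * sigma ^ 2)).
  - unfold u. field. repeat split; lra.
  - unfold v, u. rewrite <- H22 at 1. field; lra.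
Qed.

Lemma phi_mass_cv mu sigma : 0 < sigma ->
  Un_cv (fun m => RInt (phi mu sigma) (- INR m) (INR m)) 1.
Proof.
  intros Hs eps He.
  set (u := / (sqrt 2 * sigma)). set (v := - mu * u).
  assert (H2 : 0 < sqrt 2) by (apply sqrt_lt_R0; lra).
  assert (HP : 0 < sqrt PI) by (apply sqrt_lt_R0, PI_RGT_0).
  assert (Hu : 0 < u) by (unfold u; apply Rinv_0_lt_compat; nra).
  destruct (gauss_whole_line (eps * sqrt PI) ltac:(nra)) as [X [X0 HX]].
  set (m0 := up ((X + Rabs v + 1) / u)).
  destruct (archimed ((X + Rabs v + 1) / u)) as [Hm0 _]. fold m0 in Hm0.
  assert (m0pos : 0 < IZR m0).
  { eapply Rle_lt_trans; [|exact Hm0].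
    apply Rmult_le_pos; [pose proof (Rabs_pos v); lra|left; apply Rinv_0_lt_compat; auto]. }
  exists (Z.to_nat m0). intros m Hm. unfold R_dist.
  assert (Hm' : IZR m0 <= INR m).
  { apply lt_IZR in m0pos. rewrite <- (Z2Nat.id m0) by lia.
    rewrite <- INR_IZR_INZ. apply le_INR; lia. }
  rewrite phi_RInt_gauss by auto. fold u v.
  assert (Hum : X + Rabs v + 1 < u * INR m).
  { apply Rmult_lt_reg_r with (/ u); [apply Rinv_0_lt_compat; auto|].
    replace (u * INR m * / u) with (INR m) by (field; lra). lra. }
  pose proof (Rle_abs v). pose proof (Rle_abs (-v)). rewrite Rabs_Ropp in *.
  specialize (HX (u * - INR m + v) (u * INR m + v) ltac:(lra) ltac:(lra)).
  replace (/ sqrt PI * RInt gauss (u * - INR m + v) (u * INR m + v) - 1) with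
    (/ sqrt PI * (RInt gauss (u * - INR m + v) (u * INR m + v) - sqrt PI)) by (field; lra).
  rewrite Rabs_mult, Rabs_inv, (Rabs_right (sqrt PI)) by lra.
  apply Rmult_lt_reg_l with (sqrt PI); auto. rewrite <- Rmult_assoc, Rinv_r, Rmult_1_l by lra. lra.
Qed.

Lemma ml_best_spec n sigma C y k : (1 <= k)%nat ->
  (ml_best n sigma C y k < k)%nat /\
  forall u, (u < k)%nat -> w n sigma y (C u) <= w n sigma y (C (ml_best n sigma C y k)).
Proof.
  intros Hk. induction k as [|k IH]; [lia|].
  destruct k as [|k'].
  - simpl. split; [lia|]. intros u Hu. replace u with 0%nat by lia. lra.
  - destruct (IH ltac:(lia)) as [IH1 IH2].
    change (ml_best n sigma C y (S (S k'))) with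
      (let b := ml_best n sigma C y (S k') in
       if Rlt_dec (w n sigma y (C b)) (w n sigma y (C (S k'))) then S k' else b).
    cbv zeta. destruct (Rlt_dec _ _) as [Hlt|Hge]; (split; [lia|]);
      intros u Hu; (destruct (Nat.eq_dec u (S k')) as [->|]; [lra|]);
      specialize (IH2 u ltac:(lia)); lra.
Qed.

Definition best_lik (n M : nat) (sigma : R) (C : codebook) (y : vecR) : R :=
  w n sigma y (C (ml_decode n M sigma C y)).

Definition total_lik (n M : nat) (sigma : R) (C : codebook) (y : vecR) : R :=
  rsum M (fun v => w n sigma y (C v)).

Lemma rsum_except K (a : nat -> R) d : (d < K)%nat ->
  rsum K (fun v => a v * (if Nat.eqb d v then 0 else 1)) = rsum K a - a d.
Proof.
  revert d; induction K; intros d Hd; [lia|]. simpl.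
  destruct (Nat.eq_dec d K) as [->|].
  - rewrite Nat.eqb_refl, (rsum_ext K _ a); [ring|].
    intros k Hk. destruct (Nat.eqb_spec K k); [lia|ring].
  - rewrite IHK by lia. destruct (Nat.eqb_spec d K); [lia|ring].
Qed.

Lemma error_integrand_eq n M sigma C y : (1 <= M)%nat ->
  / INR M * rsum M (fun v => w n sigma y (C v) * err_ind n M sigma C v y) =
  / INR M * (total_lik n M sigma C y - best_lik n M sigma C y).
Proof.
  intros HM. f_equal. apply rsum_except. apply ml_best_spec; auto.
Qed.

Lemma w_nonneg n sigma y x : 0 < sigma -> 0 <= w n sigma y x.
Proof. intros. apply rprod_nonneg. intros; apply phi_bounds; auto. Qed.

Lemma best_le_total n M sigma C y : 0 < sigma -> (1 <= M)%nat ->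
  best_lik n M sigma C y <= total_lik n M sigma C y.
Proof.
  intros. apply rsum_term_le with (f := fun v => w n sigma y (C v)).
  - apply ml_best_spec; auto.
  - intros; apply w_nonneg; auto.
Qed.

Lemma rprod_lipschitz d (F : nat -> R -> R) B Lam T y z : 1 <= B -> 0 <= Lam ->
  (forall i t, (i < d)%nat -> Rabs t <= T -> Rabs (F i t) <= B) ->
  (forall i a b, (i < d)%nat -> Rabs a <= T -> Rabs b <= T ->
     Rabs (F i a - F i b) <= Lam * Rabs (a - b)) ->
  in_box d T y -> in_box d T z ->
  Rabs (rprod d (fun i => F i (y i)) - rprod d (fun i => F i (z i)))
    <= B ^ d * Lam * rsum d (fun i => Rabs (y i - z i))
  /\ Rabs (rprod d (fun i => F i (z i))) <= B ^ d.
Proof.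
  induction d; intros HB HL Hb Hl Hy Hz.
  - simpl. rewrite Rminus_eq_0, Rabs_R0, Rabs_R1. lra.
  - destruct IHd as [I1 I2];
      [exact HB|exact HL|intros i t Hi; apply Hb; lia|intros i a b Hi; apply Hl; lia
      |intros i Hi; apply Hy; lia|intros i Hi; apply Hz; lia|].
    cbn [rprod rsum pow].
    set (P := rprod d (fun i => F i (y i))) in *. set (Q := rprod d (fun i => F i (z i))) in *.
    set (D := rsum d (fun i => Rabs (y i - z i))) in *.
    assert (Ba : Rabs (F d (y d)) <= B) by (apply Hb; auto; apply Hy; lia).
    assert (Bb : Rabs (F d (z d)) <= B) by (apply Hb; auto; apply Hz; lia).
    assert (Lab : Rabs (F d (y d) - F d (z d)) <= Lam * Rabs (y d - z d))
      by (apply Hl; [lia|apply Hy; lia|apply Hz; lia]).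
    assert (Bd1 : 1 <= B ^ d) by (apply pow_R1_Rle; auto).
    assert (HD : 0 <= D) by (apply rsum_nonneg; intros; apply Rabs_pos).
    pose proof (Rabs_pos (y d - z d)). pose proof (Rabs_pos Q). pose proof (Rabs_pos (P - Q)).
    split.
    + replace (P * F d (y d) - Q * F d (z d))
        with ((P - Q) * F d (y d) + Q * (F d (y d) - F d (z d))) by ring.
      eapply Rle_trans; [apply Rabs_triang|]. rewrite !Rabs_mult.
      assert (A1 : Rabs (P - Q) * Rabs (F d (y d)) <= B ^ d * Lam * D * B)
        by (apply Rmult_le_compat; auto; apply Rabs_pos).
      assert (A2 : Rabs Q * Rabs (F d (y d) - F d (z d)) <= B ^ d * (Lam * Rabs (y d - z d)))
        by (apply Rmult_le_compat; auto; apply Rabs_pos).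
      assert (0 <= B ^ d * (Lam * Rabs (y d - z d)))
        by (apply Rmult_le_pos; [lra|apply Rmult_le_pos; auto]).
      nra.
    + rewrite Rabs_mult, Rmult_comm. apply Rmult_le_compat; auto; apply Rabs_pos.
Qed.

Lemma w_box_lipschitz d sigma T Bx : 0 < sigma -> 0 <= T -> 0 <= Bx ->
  exists L, 0 <= L /\ forall x, (forall i, (i < d)%nat -> Rabs (x i) <= Bx) ->
    box_lipschitz d T L (fun y => w d sigma y x).
Proof.
  intros Hs HT HBx. pose proof (phi_max_pos sigma Hs). assert (Hs2 : 0 < 2 * sigma ^ 2) by nra.
  set (Lam := phi_max sigma * ((2 * T + 2 * Bx) / (2 * sigma ^ 2))).
  assert (HLam : 0 <= Lam).
  { apply Rmult_le_pos; [lra|]. apply Rmult_le_pos; [lra|left; apply Rinv_0_lt_compat; auto]. }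
  pose proof (Rmax_l 1 (phi_max sigma)).
  exists (Rmax 1 (phi_max sigma) ^ d * Lam). split; [apply Rmult_le_pos; auto; apply pow_le; lra|].
  intros x Hx y z Hy Hz _. unfold w.
  apply (rprod_lipschitz d (fun i t => phi (x i) sigma t) (Rmax 1 (phi_max sigma)) Lam T y z); auto.
  - intros i t _ _. rewrite Rabs_right by (apply Rle_ge; apply phi_bounds; auto).
    eapply Rle_trans; [apply phi_bounds; auto|apply Rmax_r].
  - intros i a b Hi Ha Hb. eapply Rle_trans; [apply phi_lipschitz; auto|].
    apply Rmult_le_compat_r; [apply Rabs_pos|]. apply Rmult_le_compat_l; [lra|].
    apply Rmult_le_compat_r; [left; apply Rinv_0_lt_compat; auto|]. specialize (Hx i Hi). lra.
Qed.

Lemma codebook_bounded d M (C : codebook) : exists Bx, 0 <= Bx /\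
  forall v i, (v < M)%nat -> (i < d)%nat -> Rabs (C v i) <= Bx.
Proof.
  exists (rsum M (fun v => rsum d (fun i => Rabs (C v i)))). split.
  - apply rsum_nonneg; intros; apply rsum_nonneg; intros; apply Rabs_pos.
  - intros v i Hv Hi. eapply Rle_trans.
    + apply (rsum_term_le d (fun i => Rabs (C v i)) i Hi); intros; apply Rabs_pos.
    + apply (rsum_term_le M (fun v => rsum d (fun i => Rabs (C v i))) v Hv).
      intros; apply rsum_nonneg; intros; apply Rabs_pos.
Qed.

Lemma best_lik_lipschitz d M sigma C T L : (1 <= M)%nat ->
  (forall v, (v < M)%nat -> box_lipschitz d T L (fun y => w d sigma y (C v))) ->
  box_lipschitz d T L (best_lik d M sigma C).
Proof.
  intros HM H y z Hy Hz He. unfold best_lik, ml_decode.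
  destruct (ml_best_spec d sigma C y M HM) as [Ay By].
  destruct (ml_best_spec d sigma C z M HM) as [Az Bz].
  set (a := ml_best d sigma C y M) in *. set (b := ml_best d sigma C z M) in *.
  specialize (By b Az). specialize (Bz a Ay).
  pose proof (H a Ay y z Hy Hz He) as Ha. pose proof (H b Az y z Hy Hz He) as Hb.
  apply Rabs_le. apply Rabs_le_between in Ha. apply Rabs_le_between in Hb. lra.
Qed.

Lemma best_lik_box_lipschitz d M sigma C T : (1 <= M)%nat -> 0 < sigma -> 0 <= T ->
  exists L, 0 <= L /\ box_lipschitz d T L (best_lik d M sigma C).
Proof.
  intros HM Hs HT. destruct (codebook_bounded d M C) as [Bx [HBx HC]].
  destruct (w_box_lipschitz d sigma T Bx Hs HT HBx) as [L [HL Hw]].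
  exists L. split; auto. apply best_lik_lipschitz; auto.
Qed.

Definition phi_riemann (sigma : R) (N : nat) (T mu : R) : R :=
  rsum N (fun k => phi mu sigma (grid_point N T k)) * (2 * T / INR N).

Definition phi_mass (sigma T mu : R) : R := RInt (phi mu sigma) (- T) T.

Lemma riemann_box_w d sigma N T x :
  riemann_box d N T (fun y => w d sigma y x) = rprod d (fun i => phi_riemann sigma N T (x i)).
Proof. unfold w. apply (riemann_box_prod d N T (fun i t => phi (x i) sigma t)). Qed.

Lemma phi_riemann_cv sigma T mu : 0 < sigma -> 0 <= T ->
  Un_cv (fun N => phi_riemann sigma (S N) T mu) (phi_mass sigma T mu).
Proof.
  intros Hs HT.
  destruct (w_box_lipschitz 1 sigma T (Rabs mu) Hs HT (Rabs_pos mu)) as [L [HL Hw]].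
  apply cv_ext with (u := fun N => riemann_box 1 (S N) T (fun y => w 1 sigma y (fun _ => mu))).
  - intros N. rewrite riemann_box_w. simpl. ring.
  - replace (phi_mass sigma T mu) with (box_integral 1 T (fun y => w 1 sigma y (fun _ => mu))).
    + apply riemann_box_cv with (L := L); auto. apply Hw. intros; lra.
    + rewrite box_integral_S. apply RInt_ext. intros t Ht.
      rewrite Rmin_left, Rmax_right in Ht by lra.
      unfold slice_integral, w. simpl. unfold set_coord; simpl.
      rewrite clamp_id by lra. ring.
Qed.

Lemma has_integral_ext n f g I : (forall y, f y = g y) -> has_integral n f I -> has_integral n g I.
Proof.
  intros E [B [HB HI]]. exists B. split; auto. intros m.
  eapply cv_ext; [|apply HB]. intros N. apply riemann_box_ext, E.
Qed.

Lemma has_integral_lin n f g I J a b : has_integral n f I -> has_integral n g J ->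
  has_integral n (fun y => a * f y + b * g y) (a * I + b * J).
Proof.
  intros [Bf [HBf HIf]] [Bg [HBg HIg]].
  exists (fun m => a * Bf m + b * Bg m). split.
  - intros m. eapply cv_ext; [|apply CV_plus; apply cv_scal; [apply HBf|apply HBg]].
    intros N. unfold riemann_box. now rewrite grid_sum_plus, !grid_sum_scal, Rmult_plus_distr_r, !Rmult_assoc.
  - apply CV_plus; apply cv_scal; auto.
Qed.

Lemma total_lik_integral d M sigma C : 0 < sigma ->
  has_integral d (total_lik d M sigma C) (INR M).
Proof.
  intros Hs. exists (fun m => rsum M (fun v => rprod d (fun i => phi_mass sigma (INR m) (C v i)))).
  split.
  - intros m. apply cv_ext with
      (u := fun N => rsum M (fun v => rprod d (fun i => phi_riemann sigma (S N) (INR m) (C v i)))).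
    + intros N. unfold total_lik. rewrite riemann_box_rsum with (F := fun v y => w d sigma y (C v)).
      apply rsum_ext. intros v _. now rewrite riemann_box_w.
    + apply (cv_rsum M (fun v N => rprod d (fun i => phi_riemann sigma (S N) (INR m) (C v i)))).
      intros v _. apply (cv_rprod d (fun i N => phi_riemann sigma (S N) (INR m) (C v i))).
      intros i _. apply phi_riemann_cv; auto. apply pos_INR.
  - replace (INR M) with (rsum M (fun _ => rprod d (fun _ => 1))) by (rewrite rprod_one, rsum_const; ring).
    apply (cv_rsum M (fun v m => rprod d (fun i => phi_mass sigma (INR m) (C v i)))).
    intros v _. apply (cv_rprod d (fun i m => phi_mass sigma (INR m) (C v i))).
    intros i _. now apply phi_mass_cv.
Qed.

Lemma Pe_is_best_lik n M sigma C p : (1 <= M)%nat -> 0 < sigma ->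
  Pe_is n M sigma C p <-> has_integral n (best_lik n M sigma C) (INR M * (1 - p)).
Proof.
  intros HM Hs. assert (HMp : 0 < INR M) by (apply lt_0_INR; lia).
  pose proof (total_lik_integral n M sigma C Hs) as Htot.
  unfold Pe_is. split; intros H.
  - replace (INR M * (1 - p)) with (1 * INR M + - INR M * p) by ring.
    eapply has_integral_ext; [|apply (has_integral_lin _ _ _ _ _ 1 (- INR M) Htot H)].
    intros y. simpl. rewrite error_integrand_eq by auto. field. lra.
  - replace p with (/ INR M * INR M + - / INR M * (INR M * (1 - p))) by (field; lra).
    eapply has_integral_ext; [|apply (has_integral_lin _ _ _ _ _ (/ INR M) (- / INR M) Htot H)].
    intros y. simpl. rewrite error_integrand_eq by auto. ring.
Qed.

(* for every codebook the limits defining \int max_v w(y|c_v) dy exist: the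
   Riemann sums converge on each box (Lipschitz integrand) and the box
   integrals increase with the box and are bounded by the total mass M *)
Lemma best_lik_integral_exists d M sigma C : (1 <= M)%nat -> 0 < sigma ->
  exists X, has_integral d (best_lik d M sigma C) X.
Proof.
  intros HM Hs.
  set (W := best_lik d M sigma C). set (Xm := fun m : nat => box_integral d (INR m) W).
  assert (HWcv : forall m, Un_cv (fun N => riemann_box d (S N) (INR m) W) (Xm m)).
  { intros m. destruct (best_lik_box_lipschitz d M sigma C (INR m)) as [L [HL HWL]]; auto.
    - apply pos_INR.
    - eapply riemann_box_cv; eauto. apply pos_INR. }
  destruct (total_lik_integral d M sigma C Hs) as [Tm [HTm HTlim]].
  assert (Xgrow : Un_growing Xm).
  { intros m. destruct (best_lik_box_lipschitz d M sigma C (INR (S m))) as [L [HL HWL]]; auto.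
    - apply pos_INR.
    - apply box_integral_mono_box with (L := L); auto.
      + apply pos_INR.
      + apply le_INR; lia.
      + intros y. apply w_nonneg; auto. }
  assert (XleT : forall m, Xm m <= Tm m).
  { intros m. eapply Rle_cv_lim; [|apply HWcv|apply HTm].
    intros N. apply riemann_box_le; [apply pos_INR|lia|].
    intros y. apply best_le_total; auto. }
  destruct (maj_by_pos Tm (exist _ (INR M) HTlim)) as [ub [_ Hub]].
  assert (Xub : has_ub Xm).
  { exists ub. intros x [m ->]. eapply Rle_trans; [apply XleT|].
    eapply Rle_trans; [apply Rle_abs|apply Hub]. }
  destruct (growing_cv Xm Xgrow Xub) as [X HX].
  exists X, Xm. split; auto.
Qed.

Definition extend_codebook (n : nat) (C : codebook) (a : nat -> R) : codebook :=
  fun v => set_coord (C v) n (a v).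

Lemma w_extend n sigma C a y t v :
  w (S n) sigma (set_coord y n t) (extend_codebook n C a v)
  = w n sigma y (C v) * phi (a v) sigma t.
Proof.
  unfold w, extend_codebook. cbn [rprod]. unfold set_coord at 3 4. rewrite Nat.eqb_refl. f_equal.
  apply rprod_ext. intros i Hi. unfold set_coord. destruct (Nat.eqb_spec i n); [lia|reflexivity].
Qed.

(* filling up the power budget makes all codewords of energy n Ups, i.e.
   (n+1) times the power n Ups/(n+1) *)
Lemma extend_codebook_equal_power n M Ups C : F_m n M Ups C ->
  F_e (S n) M (INR n * Ups / INR (S n))
      (extend_codebook n C (fun v => sqrt (INR n * Ups - sqnorm n (C v)))).
Proof.
  intros HFm v Hv. unfold sqnorm. cbn [rsum]. unfold extend_codebook, set_coord.
  rewrite Nat.eqb_refl.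
  rewrite (rsum_ext n _ (fun i => C v i ^ 2)).
  2:{ intros k Hk. destruct (Nat.eqb_spec k n); [lia|reflexivity]. }
  fold (sqnorm n (C v)). rewrite pow2_sqrt by (specialize (HFm v Hv); lra).
  field. apply not_0_INR; lia.
Qed.

(* total deviation from 1 of the masses of the appended coordinates; each
   single mass is at least 1 - mass_defect *)
Definition mass_defect (M : nat) (mass : R -> R) (a : nat -> R) : R :=
  rsum M (fun v => Rabs (1 - mass (a v))).

(* at the level of Riemann sums: since max_v w'(y,t|c'_v) >= w(y|c_dec(y)) phi_{a_dec(y)}(t),
   summing over t gives the n-dimensional sum of w(y|c_dec(y)) times the
   Riemann mass of phi_{a_dec(y)}, which is at least 1 - mass_defect *)
Lemma extension_riemann_lower n M sigma C a N T : (1 <= M)%nat -> (0 < N)%nat -> 0 <= T -> 0 < sigma ->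
  (1 - mass_defect M (phi_riemann sigma N T) a) * riemann_box n N T (best_lik n M sigma C)
  <= riemann_box (S n) N T (best_lik (S n) M sigma (extend_codebook n C a)).
Proof.
  intros HM HN HT Hs.
  set (lam := 1 - mass_defect M (phi_riemann sigma N T) a).
  set (h := 2 * T / INR N).
  assert (Hh : 0 <= h) by (unfold h, Rdiv; apply Rmult_le_pos; [lra|left; apply Rinv_0_lt_compat; apply lt_0_INR; lia]).
  set (dec := fun y => ml_decode n M sigma C y).
  assert (Hdec : forall y, (dec y < M)%nat) by (intros; apply ml_best_spec; auto).
  set (W := best_lik n M sigma C).
  assert (Hmax : forall y t, W y * phi (a (dec y)) sigma t
                 <= best_lik (S n) M sigma (extend_codebook n C a) (set_coord y n t)).
  { intros y t. unfold W, best_lik. fold (dec y).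
    rewrite <- (w_extend n sigma C a y t (dec y)). apply ml_best_spec; auto. }
  assert (Hlast : riemann_box n N T (fun y => W y * phi_riemann sigma N T (a (dec y)))
     = rsum N (fun k => riemann_box n N T (fun y => W y * phi (a (dec y)) sigma (grid_point N T k)) * h)).
  { rewrite (riemann_box_ext n N T _
      (fun y => rsum N (fun k => h * (W y * phi (a (dec y)) sigma (grid_point N T k))))).
    - rewrite riemann_box_rsum. apply rsum_ext. intros k _. rewrite riemann_box_scal. ring.
    - intros y. unfold phi_riemann. fold h. rewrite rsum_scal_r, rsum_scal_l.
      apply rsum_ext. intros; ring. }
  apply Rle_trans with (rsum N (fun k => riemann_box n N T
                          (fun y => W y * phi (a (dec y)) sigma (grid_point N T k)) * h)).
  - rewrite <- Hlast, <- riemann_box_scal. apply riemann_box_le; auto. intros y.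
    assert (W0 : 0 <= W y) by (apply w_nonneg; auto).
    assert (lam <= phi_riemann sigma N T (a (dec y))).
    { unfold lam, mass_defect.
      pose proof (rsum_term_le M (fun v => Rabs (1 - phi_riemann sigma N T (a v))) (dec y) (Hdec y)
                    ltac:(intros; apply Rabs_pos)).
      pose proof (Rle_abs (1 - phi_riemann sigma N T (a (dec y)))). simpl in *. lra. }
    nra.
  - rewrite riemann_box_S. fold h. apply rsum_le. intros k Hk.
    apply Rmult_le_compat_r; auto. apply riemann_box_le; [auto|auto|intros y; apply Hmax].
Qed.

Lemma mass_defect_cv M (mass : nat -> R -> R) (lim_mass : R -> R) a :
  (forall mu, Un_cv (fun N => mass N mu) (lim_mass mu)) ->
  Un_cv (fun N => mass_defect M (mass N) a) (mass_defect M lim_mass a).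
Proof.
  intros H. apply (cv_rsum M (fun v N => Rabs (1 - mass N (a v)))). intros v _.
  apply (cv_cvabs (fun N => 1 - mass N (a v))). apply CV_minus; [apply cv_const|apply H].
Qed.

Lemma extension_integral_ge n M sigma C a X X' : (1 <= M)%nat -> 0 < sigma ->
  has_integral n (best_lik n M sigma C) X ->
  has_integral (S n) (best_lik (S n) M sigma (extend_codebook n C a)) X' ->
  X <= X'.
Proof.
  intros HM Hs [Y [HY HYlim]] [Y' [HY' HY'lim]].
  set (lam := fun m : nat => 1 - mass_defect M (phi_mass sigma (INR m)) a).
  assert (Hbox : forall m, lam m * Y m <= Y' m).
  { intros m. eapply Rle_cv_lim; [| |apply HY'].
    - intros N. apply extension_riemann_lower; auto; [lia|apply pos_INR].
    - apply CV_mult; [|apply HY]. apply CV_minus; [apply cv_const|].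
      apply mass_defect_cv. intros mu. apply phi_riemann_cv; auto. apply pos_INR. }
  (* as m --> oo the Gaussian masses tend to 1, so lam m --> 1 *)
  assert (Hlam : Un_cv lam (1 - mass_defect M (fun _ => 1) a)).
  { unfold lam. apply CV_minus; [apply cv_const|].
    apply mass_defect_cv. intros mu. now apply phi_mass_cv. }
  replace (1 - mass_defect M (fun _ => 1) a) with 1 in Hlam
    by (unfold mass_defect; rewrite Rminus_eq_0, Rabs_R0, rsum_const; ring).
  eapply Rle_cv_lim with (Un := fun m => lam m * Y m); [exact Hbox| |exact HY'lim].
  replace X with (1 * X) by ring. now apply CV_mult.
Qed.

Lemma extension_error_le n M Ups sigma C p : (1 <= M)%nat -> 0 < sigma ->
  F_m n M Ups C -> Pe_is n M sigma C p ->
  exists C' p', F_e (S n) M (INR n * Ups / INR (S n)) C' /\ Pe_is (S n) M sigma C' p' /\ p' <= p.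
Proof.
  intros HM Hs HFm HPe.
  assert (HMp : 0 < INR M) by (apply lt_0_INR; lia).
  set (C' := extend_codebook n C (fun v => sqrt (INR n * Ups - sqnorm n (C v)))).
  destruct (best_lik_integral_exists (S n) M sigma C' HM Hs) as [X' HX'].
  apply Pe_is_best_lik in HPe; auto.
  pose proof (extension_integral_ge _ _ _ _ _ _ _ HM Hs HPe HX') as Hle.
  exists C', (1 - X' / INR M). split; [|split].
  - now apply extend_codebook_equal_power.
  - apply Pe_is_best_lik; auto.
    replace (INR M * (1 - (1 - X' / INR M))) with X' by (field; lra). exact HX'.
  - apply Rmult_le_compat_l with (r := / INR M) in Hle; [|left; apply Rinv_0_lt_compat; lra].
    replace (/ INR M * (INR M * (1 - p))) with (1 - p) in Hle by (field; lra).
    unfold Rdiv. lra.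
Qed.

Theorem mainTheorem1 :
  forall (n M : nat) (Ups sigma : R),
    (1 <= n)%nat -> (2 <= M)%nat -> 0 < Ups -> 0 < sigma ->
    forall em ee : R,
      eps_star F_m n M Ups sigma em ->
      eps_star F_e (S n) M (INR n * Ups / INR (S n)) sigma ee ->
      em >= ee.
Proof.
  intros n M Ups sigma _ HM _ Hs em ee [_ Hem_glb] [Hee_lb _].
  (* ee is a lower bound of the error probabilities of maximal-power codes *)
  apply Rle_ge, Hem_glb. intros p [C [HC HPe]].
  destruct (extension_error_le n M Ups sigma C p ltac:(lia) Hs HC HPe) as [C' [p' [HC' [HPe' Hp]]]].
  apply Rle_trans with p'; auto. apply Hee_lb. now exists C'.
Qed.
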